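(* Let $a<b$, $c<d$, and let $f:[a,b]\times[c,d]\to\mathbb{R}_+$ be a nonnegative function that is convex on the coordinates. Let $n\in\mathbb{N}$ and set $x_k=a+k\frac{b-a}{n}$ and $y_k=c+k\frac{d-c}{n}$ for $k=0,1,\dots,n$. Then \begin{align*} \int_a^b\int_c^d f(x, y)\,dx\,dy &\leq \frac{b-a}{4n}\Big[(n+1)\int_c^d f(a,y)\,dy+(n+1)\int_c^d f(b,y)\,dy+2\sum_{k=1}^{n-1} \int_c^d f(x_k,y)\,dy\Big]\\ &\quad +\frac{d-c}{4n}\Big[(n+1)\int_a^b f(x,c)\,dx+(n+1)\int_a^b f(x,d)\,dx+2\sum_{k=1}^{n-1} \int_a^b f(x,y_k)\,dx\Big]. \end{align*}
   Context: A function $f:[a,b]\times[c,d]\to\mathbb{R}$ is called convex on the coordinates if for every $y\in[c,d]$ the partial map $u\mapsto f(u,y)$ is convex on $[a,b]$, and for every $x\in[a,b]$ the partial map $v\mapsto f(x,v)$ is convex on $[c,d]$. Empty sums are zero. *)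

From Stdlib Require Import Reals Lra ClassicalEpsilon.
Open Scope R_scope.

(* The Riemann integral of g over [a,b], as a total function:
   the value of RiemannInt for any integrability proof (the value is
   independent of the proof, RiemannInt_P5); an arbitrary real if g is
   not Riemann integrable. *)
Definition Rint (g : R -> R) (a b : R) : R :=
  epsilon (inhabits 0)
    (fun I => exists pr : Riemann_integrable g a b, RiemannInt pr = I).

Definition convex_on (a b : R) (g : R -> R) : Prop :=
  forall u v t, a <= u <= b -> a <= v <= b -> 0 <= t <= 1 ->
    g (t * u + (1 - t) * v) <= t * g u + (1 - t) * g v.

Definition convex_coord (a b c d : R) (f : R -> R -> R) : Prop :=
  (forall y, c <= y <= d -> convex_on a b (fun u => f u y)) /\
  (forall x, a <= x <= b -> convex_on c d (fun v => f x v)).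

Fixpoint rsum (F : nat -> R) (n : nat) : R :=
  match n with
  | O => 0
  | S m => rsum F m + F m
  end.

(* Integrating in y turns f into the function G x = int_c^d f(x,y) dy, which is
   convex on [a,b] because the integral is linear and monotone. For a convex
   function the trapezoid rule overestimates the integral, both with one piece
   and with n pieces; the average of these two estimates is exactly the first
   bracket of the right-hand side, so that bracket alone already bounds the
   double integral, while the second bracket is nonnegative because f is.
   Riemann integrability of a convex function comes from its continuity in
   the interior together with the existence of one-sided limits at the
   endpoints, where the chord slopes are monotone. *)

From Stdlib Require Import Reals Lra Lia Classical ClassicalEpsilon.
From Coquelicot Require Import Coquelicot.
Open Scope R_scope.

Lemma Rint_RInt (g : R -> R) (a b : R) : ex_RInt g a b -> Rint g a b = RInt g a b.
Proof.
  intros Hg. pose proof (ex_RInt_Reals_0 _ _ _ Hg) as pr.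
  assert (Hex : exists I, exists pr : Riemann_integrable g a b, RiemannInt pr = I)
    by (exists (RiemannInt pr); exists pr; reflexivity).
  unfold Rint. destruct (epsilon_spec (inhabits 0) _ Hex) as [pr' <-].
  symmetry. apply RInt_Reals.
Qed.

Lemma Rint_ge_0 (g : R -> R) (a b : R) : a <= b -> ex_RInt g a b ->
  (forall x, a <= x <= b -> 0 <= g x) -> 0 <= Rint g a b.
Proof.
  intros Hab Hg Hpos. rewrite Rint_RInt by exact Hg.
  apply RInt_ge_0; [exact Hab|exact Hg|]. intros x Hx. apply Hpos. lra.
Qed.

Lemma continuous_of_lipschitz_at (h : R -> R) (z K delta : R) : 0 < delta ->
  (forall x, Rabs (x - z) < delta -> Rabs (h x - h z) <= K * Rabs (x - z)) ->
  continuous h z.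
Proof.
  intros Hdelta Hlip. apply filterlim_locally. intros eps.
  assert (HK : 0 < Rabs K + 1) by (pose proof (Rabs_pos K); lra).
  assert (Hr : 0 < Rmin delta (eps / (Rabs K + 1))).
  { apply Rmin_pos; [lra|]. apply Rdiv_lt_0_compat; [apply cond_pos|lra]. }
  exists (mkposreal _ Hr). intros x Hx. change (Rabs (x - z) < Rmin delta (eps / (Rabs K + 1))) in Hx.
  change (Rabs (h x - h z) < eps).
  pose proof (Rmin_l delta (eps / (Rabs K + 1))). pose proof (Rmin_r delta (eps / (Rabs K + 1))).
  pose proof (Rle_abs K). pose proof (Rabs_pos (x - z)).
  apply Rle_lt_trans with (K * Rabs (x - z)); [apply Hlip; lra|].
  apply Rle_lt_trans with ((Rabs K + 1) * Rabs (x - z)); [nra|].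
  apply Rlt_le_trans with ((Rabs K + 1) * (eps / (Rabs K + 1))); [apply Rmult_lt_compat_l; lra|].
  right. field. lra.
Qed.

Lemma nondecreasing_right_limit (t : R -> R) (p m B : R) : p < m ->
  (forall x y, p < x -> x <= y -> y < m -> t x <= t y) ->
  (forall x, p < x < m -> B <= t x) ->
  exists l, filterlim t (at_right p) (locally l).
Proof.
  intros Hpm Hmono Hlow.
  set (E := fun v => exists x, p < x < m /\ v = - t x).
  assert (HE : bound E) by (exists (- B); intros v [x [Hx ->]]; specialize (Hlow x Hx); lra).
  assert (Hne : exists v, E v) by (exists (- t ((p + m) / 2)), ((p + m) / 2); split; [lra|reflexivity]).
  destruct (completeness E HE Hne) as [S [Hub Hleast]].
  exists (- S). apply filterlim_locally. intros eps.
  assert (Hx0 : exists x0, p < x0 < m /\ t x0 < - S + eps).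
  { apply NNPP. intros Hno. assert (Hub' : is_upper_bound E (S - eps)).
    { intros v [x [Hx ->]]. apply Rnot_lt_le. intros Hlt. apply Hno.
      exists x. split; [exact Hx|]. pose proof (cond_pos eps). lra. }
    specialize (Hleast _ Hub'). pose proof (cond_pos eps). lra. }
  destruct Hx0 as [x0 [Hx0 Ht0]].
  assert (Hd : 0 < x0 - p) by lra.
  exists (mkposreal _ Hd). intros x Hx Hpx. change (Rabs (x - p) < x0 - p) in Hx.
  change (Rabs (t x - - S) < eps). apply Rabs_def2 in Hx.
  assert (Hx_in : E (- t x)) by (exists x; split; [lra|reflexivity]).
  specialize (Hub _ Hx_in).
  assert (t x <= t x0) by (apply Hmono; lra).
  apply Rabs_def1; lra.
Qed.

Lemma convex_on_sub (a b p q : R) (g : R -> R) :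
  convex_on a b g -> a <= p -> q <= b -> convex_on p q g.
Proof. intros Hg Hap Hqb u v t Hu Hv Ht. apply Hg; lra || assumption. Qed.

Lemma convex_on_opp (p q : R) (g : R -> R) :
  convex_on p q g -> convex_on (- q) (- p) (fun x => g (- x)).
Proof.
  intros Hg u v t Hu Hv Ht.
  replace (- (t * u + (1 - t) * v)) with (t * - u + (1 - t) * - v) by ring.
  apply Hg; lra || assumption.
Qed.

Section ConvexOn.

Variables (p q : R) (g : R -> R).
Hypothesis g_convex : convex_on p q g.

Lemma convex_on_chord (x y z : R) : p <= x -> x <= y -> y <= z -> z <= q -> x < z ->
  (z - x) * g y <= (z - y) * g x + (y - x) * g z.
Proof.
  intros Hpx Hxy Hyz Hzq Hxz.
  set (t := (z - y) / (z - x)).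
  assert (Ht : 0 <= t <= 1).
  { unfold t. split; [apply Rdiv_le_0_compat; lra|].
    apply Rmult_le_reg_r with (z - x); [lra|]. unfold Rdiv. rewrite Rmult_assoc, Rinv_l; lra. }
  pose proof (g_convex x z t ltac:(lra) ltac:(lra) Ht) as Hc.
  replace (t * x + (1 - t) * z) with y in Hc by (unfold t; field; lra).
  replace ((z - y) * g x + (y - x) * g z) with ((z - x) * (t * g x + (1 - t) * g z))
    by (unfold t; field; lra).
  apply Rmult_le_compat_l; lra.
Qed.

Lemma convex_on_slope_le (x y m : R) : p <= x -> x <= y -> y < m -> m <= q ->
  (g m - g x) / (m - x) <= (g m - g y) / (m - y).
Proof.
  intros Hpx Hxy Hym Hmq.
  pose proof (convex_on_chord x y m Hpx Hxy ltac:(lra) Hmq ltac:(lra)) as Hc.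
  apply Rmult_le_reg_r with ((m - x) * (m - y)); [apply Rmult_lt_0_compat; lra|].
  replace ((g m - g x) / (m - x) * ((m - x) * (m - y))) with ((g m - g x) * (m - y)) by (field; lra).
  replace ((g m - g y) / (m - y) * ((m - x) * (m - y))) with ((g m - g y) * (m - x)) by (field; lra).
  nra.
Qed.

Lemma convex_on_lipschitz_at (z x : R) : p < z < q -> p <= x <= q ->
  Rabs (g x - g z) <=
    (Rabs ((g z - g p) / (z - p)) + Rabs ((g q - g z) / (q - z))) * Rabs (x - z).
Proof.
  intros Hz Hx.
  set (sl := (g z - g p) / (z - p)). set (sr := (g q - g z) / (q - z)).
  assert (Hsl : g z - g p = sl * (z - p)) by (unfold sl; field; lra).
  assert (Hsr : g q - g z = sr * (q - z)) by (unfold sr; field; lra).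
  pose proof (Rle_abs sl). pose proof (Rle_abs (- sl)). pose proof (Rle_abs sr). pose proof (Rle_abs (- sr)).
  rewrite Rabs_Ropp in *.
  destruct (Rle_lt_dec x z) as [Hxz|Hzx].
  - destruct (Req_dec x z) as [->|Hne].
    { rewrite !Rminus_diag, Rabs_R0, Rmult_0_r. lra. }
    pose proof (convex_on_chord p x z ltac:(lra) ltac:(lra) ltac:(lra) ltac:(lra) ltac:(lra)).
    pose proof (convex_on_chord x z q ltac:(lra) ltac:(lra) ltac:(lra) ltac:(lra) ltac:(lra)).
    rewrite (Rabs_left (x - z)) by lra.
    assert (Hup : g x - g z <= (z - x) * - sl) by (apply Rmult_le_reg_l with (z - p); nra).
    assert (Hlo : (z - x) * - sr <= g x - g z) by (apply Rmult_le_reg_l with (q - z); nra).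
    apply Rabs_le. split; nra.
  - pose proof (convex_on_chord z x q ltac:(lra) ltac:(lra) ltac:(lra) ltac:(lra) ltac:(lra)).
    pose proof (convex_on_chord p z x ltac:(lra) ltac:(lra) ltac:(lra) ltac:(lra) ltac:(lra)).
    rewrite (Rabs_right (x - z)) by lra.
    assert (Hup : g x - g z <= (x - z) * sr) by (apply Rmult_le_reg_l with (q - z); nra).
    assert (Hlo : (x - z) * sl <= g x - g z) by (apply Rmult_le_reg_l with (z - p); nra).
    apply Rabs_le. split; nra.
Qed.

Lemma convex_on_continuous_interior (z : R) : p < z < q -> continuous g z.
Proof.
  intros Hz.
  apply (continuous_of_lipschitz_at g z
           (Rabs ((g z - g p) / (z - p)) + Rabs ((g q - g z) / (q - z))) (Rmin (z - p) (q - z))).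
  - apply Rmin_pos; lra.
  - intros x Hx. apply convex_on_lipschitz_at; [exact Hz|].
    pose proof (Rmin_l (z - p) (q - z)). pose proof (Rmin_r (z - p) (q - z)).
    apply Rabs_def2 in Hx. lra.
Qed.

(* The chord slope from [x] to the midpoint [m] decreases to a limit as [x] tends to [p]. *)
Lemma convex_on_right_limit : p < q -> exists l, filterlim g (at_right p) (locally l).
Proof.
  intros Hpq. set (m := (p + q) / 2). set (t := fun x => (g m - g x) / (m - x)).
  destruct (nondecreasing_right_limit t p m (t p)) as [T HT].
  { unfold m; lra. }
  { intros x y Hx Hxy Hy. apply convex_on_slope_le; unfold m in *; lra. }
  { intros x Hx. apply convex_on_slope_le; unfold m in *; lra. }
  exists (g m - (m - p) * T).
  apply (filterlim_ext_loc (fun x => g m - (m - x) * t x)).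
  { exists (mkposreal (m - p) ltac:(unfold m; lra)). intros x Hx Hpx.
    change (Rabs (x - p) < m - p) in Hx. apply Rabs_def2 in Hx.
    unfold t. field. lra. }
  apply (filterlim_comp_2 (G:=locally (m - p)) (H:=locally T)
           (fun x => m - x) t (fun u s => g m - u * s)); [| exact HT |].
  - apply (filterlim_comp _ _ _ (fun x => x) (fun x => m - x) _ (locally p)).
    + apply filter_le_within.
    + apply continuity_pt_filterlim. reg.
  - apply (filterlim_comp _ _ _ (fun z => fst z * snd z) (fun v => g m - v) _ (locally ((m - p) * T))).
    + apply (filterlim_mult (K:=R_AbsRing)).
    + apply continuity_pt_filterlim. reg.
Qed.

End ConvexOn.

Lemma convex_on_left_limit (p q : R) (g : R -> R) : p < q -> convex_on p q g ->
  exists l, filterlim g (at_left q) (locally l).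
Proof.
  intros Hpq Hg.
  destruct (convex_on_right_limit (- q) (- p) (fun x => g (- x)) (convex_on_opp p q g Hg))
    as [l Hl]; [lra|].
  exists l. apply (filterlim_ext (fun x => g (- - x))).
  { intros x. rewrite Ropp_involutive. reflexivity. }
  exact (filterlim_comp _ _ _ _ (fun x => g (- x)) _ _ _ (filterlim_Ropp_left q) Hl).
Qed.

Lemma ex_RInt_one_sided_limits (h : R -> R) (p q lp lq : R) : p < q ->
  (forall c, p < c < q -> continuous h c) ->
  filterlim h (at_right p) (locally lp) -> filterlim h (at_left q) (locally lq) ->
  ex_RInt h p q.
Proof.
  intros Hpq Hc Hp Hq.
  destruct (C0_extension_lt h lp lq p q Hpq Hc Hp Hq) as [h' [Hc' [Heq _]]].
  apply (ex_RInt_ext h').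
  { rewrite Rmin_left, Rmax_right by lra. exact Heq. }
  apply (ex_RInt_continuous (V:=R_CompleteNormedModule)). intros z _. apply Hc'.
Qed.

Lemma convex_on_ex_RInt (p q : R) (g : R -> R) : p < q -> convex_on p q g -> ex_RInt g p q.
Proof.
  intros Hpq Hg.
  destruct (convex_on_right_limit p q g Hg Hpq) as [lp Hp].
  destruct (convex_on_left_limit p q g Hpq Hg) as [lq Hq].
  apply (ex_RInt_one_sided_limits g p q lp lq Hpq); [|exact Hp|exact Hq].
  exact (convex_on_continuous_interior p q g Hg).
Qed.

Lemma convex_on_RInt_le_trapezoid (p q : R) (g : R -> R) : p < q -> convex_on p q g ->
  RInt g p q <= (q - p) / 2 * (g p + g q).
Proof.
  intros Hpq Hg.
  set (chord := fun x => g p + (x - p) * ((g q - g p) / (q - p))).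
  assert (Hchord : is_RInt chord p q ((q - p) / 2 * (g p + g q))).
  { set (F := fun x => g p * x + (x - p) ^ 2 / 2 * ((g q - g p) / (q - p))).
    replace ((q - p) / 2 * (g p + g q)) with (minus (F q) (F p))
      by (unfold minus, plus, opp, F; simpl; field; lra).
    apply (is_RInt_derive (V:=R_CompleteNormedModule)).
    - intros x _. unfold F, chord. auto_derive; [exact I|]. field. lra.
    - intros x _. apply continuity_pt_filterlim. unfold chord. reg. }
  rewrite <- (is_RInt_unique _ _ _ _ Hchord).
  apply RInt_le; [lra|apply convex_on_ex_RInt; assumption|eexists; exact Hchord|].
  intros x Hx. unfold chord.
  pose proof (convex_on_chord p q g Hg p x q ltac:(lra) ltac:(lra) ltac:(lra) ltac:(lra) Hpq).
  apply Rmult_le_reg_l with (q - p); [lra|].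
  replace ((q - p) * (g p + (x - p) * ((g q - g p) / (q - p))))
    with ((q - x) * g p + (x - p) * g q) by (field; lra).
  assumption.
Qed.

Definition grid (a b : R) (n k : nat) : R := a + INR k * ((b - a) / INR n).

Lemma grid_S (a b : R) (n k : nat) : grid a b n (S k) = grid a b n k + (b - a) / INR n.
Proof. unfold grid. rewrite S_INR. ring. Qed.

Lemma grid_in (a b : R) (n k : nat) : a <= b -> (k <= n)%nat -> (1 <= n)%nat ->
  a <= grid a b n k <= b.
Proof.
  intros Hab Hk Hn. unfold grid.
  assert (Hn' : 0 < INR n) by (apply lt_0_INR; lia).
  assert (Hh : 0 <= (b - a) / INR n) by (apply Rdiv_le_0_compat; lra).
  pose proof (pos_INR k). apply le_INR in Hk.
  assert (INR k * ((b - a) / INR n) <= INR n * ((b - a) / INR n)) by (apply Rmult_le_compat_r; lra).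
  replace (INR n * ((b - a) / INR n)) with (b - a) in * by (field; lra).
  split; nra.
Qed.

Lemma rsum_nonneg (F : nat -> R) (m : nat) : (forall k, (k < m)%nat -> 0 <= F k) -> 0 <= rsum F m.
Proof.
  induction m as [|m IH]; intros HF; simpl; [lra|].
  pose proof (HF m ltac:(lia)). assert (0 <= rsum F m) by (apply IH; intros; apply HF; lia). lra.
Qed.

Lemma rsum_adjacent_pairs (u : nat -> R) (m : nat) :
  rsum (fun k => u k + u (S k)) (S m) = u 0%nat + u (S m) + 2 * rsum (fun k => u (S k)) m.
Proof. induction m as [|m IH]; [simpl; ring|]. simpl in *. rewrite IH. ring. Qed.

Lemma convex_on_RInt_le_composite_trapezoid (a b : R) (g : R -> R) (n : nat) :
  a < b -> convex_on a b g -> (1 <= n)%nat ->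
  RInt g a b <= (b - a) / INR n / 2 * rsum (fun k => g (grid a b n k) + g (grid a b n (S k))) n.
Proof.
  intros Hab Hg Hn.
  assert (Hint : ex_RInt g a b) by (apply convex_on_ex_RInt; assumption).
  assert (Hgrid : forall k, (k <= n)%nat -> a <= grid a b n k <= b) by (intros; apply grid_in; lia || lra).
  assert (Hh : 0 < (b - a) / INR n) by (apply Rdiv_lt_0_compat; [lra|apply lt_0_INR; lia]).
  assert (Hpartial : forall m, (m <= n)%nat -> RInt g a (grid a b n m) <=
    (b - a) / INR n / 2 * rsum (fun k => g (grid a b n k) + g (grid a b n (S k))) m).
  { induction m as [|m IH]; intros Hm.
    - unfold grid. simpl. rewrite Rmult_0_l, Rplus_0_r, RInt_point. unfold zero; simpl. lra.
    - pose proof (Hgrid m ltac:(lia)). pose proof (Hgrid (S m) Hm).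
      pose proof (grid_S a b n m). set (h := (b - a) / INR n) in *.
      assert (Hm1 : ex_RInt g a (grid a b n (S m)))
        by (apply (ex_RInt_Chasles_1 (V:=R_CompleteNormedModule) _ _ _ b); [lra|exact Hint]).
      rewrite <- (RInt_Chasles (V:=R_CompleteNormedModule) g a (grid a b n m)).
      + pose proof (IH ltac:(lia)).
        pose proof (convex_on_RInt_le_trapezoid (grid a b n m) (grid a b n (S m)) g ltac:(lra)
                      (convex_on_sub a b (grid a b n m) (grid a b n (S m)) g Hg ltac:(lra) ltac:(lra))).
        change (RInt g a (grid a b n m) + RInt g (grid a b n m) (grid a b n (S m)) <=
          h / 2 * (rsum (fun k => g (grid a b n k) + g (grid a b n (S k))) m
                   + (g (grid a b n m) + g (grid a b n (S m))))).
        replace (grid a b n (S m) - grid a b n m) with h in * by lra.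
        lra.
      + apply (ex_RInt_Chasles_1 (V:=R_CompleteNormedModule) _ _ _ (grid a b n (S m))); [lra|exact Hm1].
      + apply (ex_RInt_Chasles_2 (V:=R_CompleteNormedModule) _ a); [lra|exact Hm1]. }
  replace b with (grid a b n n) at 1 by (unfold grid; field; apply not_0_INR; lia).
  apply Hpartial. lia.
Qed.

(* Average of the composite rule with [n] pieces and the one-piece trapezoid rule. *)
Lemma convex_on_RInt_le_trapezoid_average (a b : R) (g : R -> R) (n : nat) :
  a < b -> convex_on a b g -> (1 <= n)%nat ->
  RInt g a b <= (b - a) / (4 * INR n) *
     (INR (n + 1) * g a + INR (n + 1) * g b
      + 2 * rsum (fun k => g (grid a b n (S k))) (n - 1)).
Proof.
  intros Hab Hg Hn.
  pose proof (convex_on_RInt_le_composite_trapezoid a b g n Hab Hg Hn) as Hcomp.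
  pose proof (convex_on_RInt_le_trapezoid a b g Hab Hg) as Hone.
  destruct n as [|m]; [lia|].
  rewrite rsum_adjacent_pairs in Hcomp.
  replace (grid a b (S m) 0) with a in Hcomp by (unfold grid; simpl; ring).
  replace (grid a b (S m) (S m)) with b in Hcomp by (unfold grid; field; apply not_0_INR; lia).
  replace (S m - 1)%nat with m by lia. rewrite plus_INR. simpl (INR 1).
  assert (Hm : 0 < INR (S m)) by (apply lt_0_INR; lia).
  set (s := rsum (fun k => g (grid a b (S m) (S k))) m) in *.
  replace ((b - a) / (4 * INR (S m)) * ((INR (S m) + 1) * g a + (INR (S m) + 1) * g b + 2 * s))
    with (((b - a) / INR (S m) / 2 * (g a + g b + 2 * s) + (b - a) / 2 * (g a + g b)) / 2)
    by (field; lra).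
  lra.
Qed.

Lemma trapezoid_average_ge_0 (a b : R) (u : R -> R) (n : nat) :
  a < b -> (1 <= n)%nat -> (forall x, a <= x <= b -> 0 <= u x) ->
  0 <= (b - a) / (4 * INR n) *
     (INR (n + 1) * u a + INR (n + 1) * u b
      + 2 * rsum (fun k => u (grid a b n (S k))) (n - 1)).
Proof.
  intros Hab Hn Hpos.
  pose proof (lt_0_INR n ltac:(lia)). pose proof (pos_INR (n + 1)).
  pose proof (Hpos a ltac:(lra)). pose proof (Hpos b ltac:(lra)).
  assert (0 <= rsum (fun k => u (grid a b n (S k))) (n - 1)).
  { apply rsum_nonneg. intros k Hk. apply Hpos, grid_in; [lra|lia|lia]. }
  apply Rmult_le_pos; [apply Rdiv_le_0_compat; lra|nra].
Qed.

Lemma convex_on_RInt_param (a b c d : R) (f : R -> R -> R) : c < d ->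
  (forall y, c <= y <= d -> convex_on a b (fun x => f x y)) ->
  (forall x, a <= x <= b -> ex_RInt (f x) c d) ->
  convex_on a b (fun x => RInt (f x) c d).
Proof.
  intros Hcd Hconv Hint u v t Hu Hv Ht.
  assert (Hw : a <= t * u + (1 - t) * v <= b) by nra.
  assert (Hcomb : is_RInt (fun y => t * f u y + (1 - t) * f v y) c d
                    (t * RInt (f u) c d + (1 - t) * RInt (f v) c d)).
  { apply (is_RInt_plus (V:=R_NormedModule) (fun y => t * f u y) (fun y => (1 - t) * f v y));
      apply (is_RInt_scal (V:=R_NormedModule));
      apply (RInt_correct (V:=R_CompleteNormedModule)), Hint; assumption. }
  rewrite <- (is_RInt_unique _ _ _ _ Hcomb).
  apply RInt_le; [lra|apply Hint, Hw|eexists; exact Hcomb|].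
  intros y Hy. apply (Hconv y ltac:(lra) u v t Hu Hv Ht).
Qed.

Lemma convex_coord_Rint_x (a b c d : R) (f : R -> R -> R) : c < d ->
  convex_coord a b c d f -> convex_on a b (fun x => Rint (fun y => f x y) c d).
Proof.
  intros Hcd [Hconv_x Hconv_y].
  assert (Hint : forall x, a <= x <= b -> ex_RInt (f x) c d)
    by (intros x Hx; apply convex_on_ex_RInt; auto).
  intros u v t Hu Hv Ht.
  rewrite !Rint_RInt by (apply Hint; nra).
  exact (convex_on_RInt_param a b c d f Hcd Hconv_x Hint u v t Hu Hv Ht).
Qed.

Theorem theorem6 (a b c d : R) (f : R -> R -> R) (n : nat)
  (hab : a < b) (hcd : c < d)
  (hpos : forall x y, a <= x <= b -> c <= y <= d -> 0 <= f x y)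
  (hconv : convex_coord a b c d f)
  (hn : (1 <= n)%nat) :
  let xk := fun k : nat => a + INR k * ((b - a) / INR n) in
  let yk := fun k : nat => c + INR k * ((d - c) / INR n) in
  Rint (fun x => Rint (fun y => f x y) c d) a b
  <= (b - a) / (4 * INR n) *
       (INR (n + 1) * Rint (fun y => f a y) c d
        + INR (n + 1) * Rint (fun y => f b y) c d
        + 2 * rsum (fun k => Rint (fun y => f (xk (S k)) y) c d) (n - 1))
   + (d - c) / (4 * INR n) *
       (INR (n + 1) * Rint (fun x => f x c) a b
        + INR (n + 1) * Rint (fun x => f x d) a b
        + 2 * rsum (fun k => Rint (fun x => f x (yk (S k))) a b) (n - 1)).
Proof.
  intros xk yk.
  pose proof (convex_coord_Rint_x a b c d f hcd hconv) as Hconv_int.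
  pose proof (convex_on_RInt_le_trapezoid_average a b _ n hab Hconv_int hn) as x_part.
  rewrite <- Rint_RInt in x_part by (apply convex_on_ex_RInt; assumption).
  assert (Hpos_int : forall y, c <= y <= d -> 0 <= Rint (fun x => f x y) a b).
  { intros y Hy. apply Rint_ge_0; [lra| |intros x Hx; apply hpos; assumption].
    apply convex_on_ex_RInt; [exact hab|apply (proj1 hconv), Hy]. }
  pose proof (trapezoid_average_ge_0 c d _ n hcd hn Hpos_int) as y_part.
  unfold xk, yk. unfold grid in x_part, y_part. cbv beta in *. lra.
Qed.
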